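(* Let $X$ be a uniformly joinable uniform space with a countable base of entourages. If $f\colon X\to Y$ is a generalized uniform covering map, then every fiber $f^{-1}(y)$, $y\in Y$, is complete.
   Context: $f(E)=\{(f(x),f(y)):(x,y)\in E\}$; a surjection generates the uniform structure of its range if the sets $f(E)$ form a base of it. $R(X,E)$ is the Rips complex (vertex set $X$, simplices finite $F$ with $F\times F\subset E$); $e(x,y)$ the edge-path; $E$-chains are sequences with consecutive pairs in $E$, viewed as edge-paths. Paths $c,d$ in $R(X,E)$ with end-points in $X$ are $E$-homotopic if their initial points $x_c,x_d$ and terminal points $y_c,y_d$ satisfy $(x_c,x_d),(y_c,y_d)\in E$ and $c\simeq e(x_c,x_d)\ast d\ast e(y_d,y_c)$ rel. end-points in $R(X,E)$. A generalized path from $x$ to $y$ is a family $\{[c_E]\}_E$ of homotopy classes rel. end-points of paths from $x$ to $y$ in $R(X,E)$ with $c_F\simeq c_E$ in $R(X,E)$ for $F\subset E$; it is $F$-short if $(x,y)\in F$ and $c_F\simeq e(x,y)$ in $R(X,F)$; $c,d$ are $F$-homotopic if $c_F$ is $F$-homotopic to $d_F$. $\widetilde f(c)_F=[f_E(c_E)]$, $E=f^{-1}(F)$. Uniformly joinable: for each $E$ there is $F$ with every $(x,y)\in F$ joined by an $E$-short generalized path. A generalized uniform covering map is an $f\colon X\to Y$ generating the uniform structure of $Y$ with: GP1 (every generalized path in $Y$ from $f(x_0)$ is $\widetilde f(d)$ for some generalized path $d$ from $x_0$); GP2 (for each $E$ there is $F$ such that generalized paths with common origin are $E$-homotopic if their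 images under $\widetilde f$ are $f(F)$-homotopic); C1 (for each $E$ there is $F$ such that every $f(F)$-chain from $f(x_0)$ lifts to an $E$-chain from $x_0$); C2 (for each $E$ there is $F$ such that $F$-chains with common origin are $E$-homotopic if their images are $f(F)$-homotopic). *)

From Stdlib Require Import List Relations.
Import ListNotations.
Set Implicit Arguments.

Definition rel (X : Type) := X -> X -> Prop.

Definition subrel {X} (E F : rel X) := forall x y, E x y -> F x y.

Record uniformity {X : Type} (U : rel X -> Prop) : Prop := {
  u_nonempty : exists E, U E;
  u_diag : forall E, U E -> forall x, E x x;
  u_up : forall E F, U E -> subrel E F -> U F;
  u_inter : forall E F, U E -> U F -> U (fun x y => E x y /\ F x y);
  u_inv : forall E, U E -> U (fun x y => E y x);
  u_comp : forall E, U E -> exists F, U F /\ forall x y z, F x y -> F y z -> E x z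
}.

(** Symmetric entourages (they form a base; all indexing below is by them). *)
Definition sent {X} (U : rel X -> Prop) (E : rel X) : Prop :=
  U E /\ forall x y, E x y -> E y x.

Definition countable_base {X} (U : rel X -> Prop) : Prop :=
  exists B : nat -> rel X, (forall n, U (B n)) /\
    forall E, U E -> exists n, subrel (B n) E.

Definition img {X Y} (f : X -> Y) (E : rel X) : rel Y :=
  fun a b => exists x y, E x y /\ f x = a /\ f y = b.
Definition preim {X Y} (f : X -> Y) (F : rel Y) : rel X :=
  fun x y => F (f x) (f y).

Definition generates {X Y} (UX : rel X -> Prop) (UY : rel Y -> Prop)
  (f : X -> Y) : Prop :=
  (forall b, exists a, f a = b) /\
  (forall E, UX E -> UY (img f E)) /\
  (forall F, UY F -> exists E, UX E /\ subrel (img f E) F).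

(** E-chains from x to y, as lists [x; ...; y]; they are the edge-paths of
    the Rips complex R(X,E) (E symmetric). *)
Inductive chain {X} (E : rel X) : X -> X -> list X -> Prop :=
| ch_one x : chain E x x [x]
| ch_cons x y z l : E x y -> chain E y z l -> chain E x z (x :: l).

(** {a,b,c} is a simplex of R(X,E). *)
Definition simplex3 {X} (E : rel X) (a b c : X) : Prop :=
  E a b /\ E b a /\ E a c /\ E c a /\ E b c /\ E c b /\ E a a /\ E b b /\ E c c.

Inductive ehstep {X} (E : rel X) : list X -> list X -> Prop :=
| eh_tri l1 a b c l2 : simplex3 E a b c ->
    ehstep E (l1 ++ a :: b :: c :: l2) (l1 ++ a :: c :: l2)
| eh_dup l1 a l2 : ehstep E (l1 ++ a :: a :: l2) (l1 ++ a :: l2).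

(** Homotopy rel. end-points of edge-paths in R(X,E)
    (edge-path equivalence). *)
Definition ehom {X} (E : rel X) : list X -> list X -> Prop :=
  clos_refl_sym_trans _ (ehstep E).

(** Paths c (from xc to yc) and d (from xd to yd) are E-homotopic:
    (xc,xd),(yc,yd) in E and c ~ e(xc,xd) * d * e(yd,yc) in R(X,E). *)
Definition ehomotopic {X} (E : rel X) (xc yc : X) (c : list X)
  (xd yd : X) (d : list X) : Prop :=
  E xc xd /\ E yc yd /\ ehom E c (xc :: d ++ [yc]).

(** Generalized paths: a family, indexed by (symmetric) entourages E, of
    (representatives of) homotopy classes of paths from x to y in R(X,E). *)
Definition gpath {X} (U : rel X -> Prop) (x y : X) (c : rel X -> list X) : Prop :=
  (forall E, sent U E -> chain E x y (c E)) /\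
  (forall E F, sent U E -> sent U F -> subrel F E -> ehom E (c F) (c E)).

Definition gshort {X} (F : rel X) (x y : X) (c : rel X -> list X) : Prop :=
  F x y /\ ehom F (c F) [x; y].

Definition ghomotopic {X} (F : rel X) (x yc : X) (c : rel X -> list X)
  (yd : X) (d : rel X -> list X) : Prop :=
  ehomotopic F x yc (c F) x yd (d F).

Definition gmap {X Y} (f : X -> Y) (c : rel X -> list X) : rel Y -> list Y :=
  fun F => map f (c (preim f F)).

Definition geq {Y} (UY : rel Y -> Prop) (c d : rel Y -> list Y) : Prop :=
  forall F, sent UY F -> ehom F (c F) (d F).

Definition uniformly_joinable {X} (U : rel X -> Prop) : Prop :=
  forall E, sent U E -> exists F, sent U F /\
    forall x y, F x y -> exists c, gpath U x y c /\ gshort E x y c.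

Definition gen_uniform_covering {X Y} (UX : rel X -> Prop) (UY : rel Y -> Prop)
  (f : X -> Y) : Prop :=
  generates UX UY f /\
  (forall x0 y' d', gpath UY (f x0) y' d' ->
     exists x d, gpath UX x0 x d /\ geq UY (gmap f d) d') /\
  (forall E, sent UX E -> exists F, sent UX F /\
     forall x0 x1 x2 c d, gpath UX x0 x1 c -> gpath UX x0 x2 d ->
       ghomotopic (img f F) (f x0) (f x1) (gmap f c) (f x2) (gmap f d) ->
       ghomotopic E x0 x1 c x2 d) /\
  (forall E, sent UX E -> exists F, sent UX F /\
     forall x0 y' l', chain (img f F) (f x0) y' l' ->
       exists x l, chain E x0 x l /\ map f l = l') /\
  (forall E, sent UX E -> exists F, sent UX F /\
     forall x0 x1 x2 c d, chain F x0 x1 c -> chain F x0 x2 d ->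
       ehomotopic (img f F) (f x0) (f x1) (map f c) (f x0) (f x2) (map f d) ->
       ehomotopic E x0 x1 c x0 x2 d).

Definition pfilter {T} (Fl : (T -> Prop) -> Prop) : Prop :=
  Fl (fun _ => True) /\
  (forall A B, Fl A -> (forall x, A x -> B x) -> Fl B) /\
  (forall A B, Fl A -> Fl B -> Fl (fun x => A x /\ B x)) /\
  ~ Fl (fun _ => False).

Definition cauchy {T} (U : rel T -> Prop) (Fl : (T -> Prop) -> Prop) : Prop :=
  forall E, U E -> exists A, Fl A /\ forall x y, A x -> A y -> E x y.

Definition converges {T} (U : rel T -> Prop) (Fl : (T -> Prop) -> Prop) (x : T) : Prop :=
  forall E, U E -> Fl (fun z => E x z).

Definition complete {T} (U : rel T -> Prop) : Prop :=
  forall Fl, pfilter Fl -> cauchy U Fl -> exists x, converges U Fl x.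

Definition induced {X} (U : rel X -> Prop) (P : X -> Prop) : rel (sig P) -> Prop :=
  fun E' => exists E, U E /\ forall a b, E (proj1_sig a) (proj1_sig b) -> E' a b.

From Stdlib Require Import List Relations Arith Lia Classical ClassicalEpsilon.
Import ListNotations.

(* A Cauchy filter on the fiber over [y] yields points [x_n] of the fiber such
   that [x_n] and [x_{n+1}] are joined by an [E_n]-short generalized path,
   where [(E_n)] is a decreasing base of symmetric entourages.  Concatenating
   these gives generalized paths [c_m] from [x_0] to [x_m], whose images are
   loops at [y].  For a fixed entourage [F] of [Y] the [F]-component of
   [f(c_m)] stabilises once [E_m] is contained in [f^{-1}(F)], because the
   image of each later short piece is [F]-homotopic to the constant edge at
   [y].  The stable components form a generalized loop at [y]; lifting it by
   GP1 gives a generalized path from [x_0] to a point [x] of the fiber, and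
   GP2 makes [x] [E_j]-close to [x_m] for all large [m], so the filter
   converges to [x]. *)

Lemma ehom_refl {X} (E : rel X) l : ehom E l l.
Proof. apply rst_refl. Qed.

Lemma ehom_sym {X} (E : rel X) l l' : ehom E l l' -> ehom E l' l.
Proof. apply rst_sym. Qed.

Lemma ehom_trans {X} (E : rel X) l l' l'' :
  ehom E l l' -> ehom E l' l'' -> ehom E l l''.
Proof. apply rst_trans. Qed.

Lemma ehom_step {X} (E : rel X) l l' : ehstep E l l' -> ehom E l l'.
Proof. apply rst_step. Qed.

Lemma ehom_compat {X Z} {E : rel X} {F : rel Z} (g : list X -> list Z) :
  (forall l l', ehstep E l l' -> ehom F (g l) (g l')) ->
  forall l l', ehom E l l' -> ehom F (g l) (g l').
Proof.
  intros hg l l' h; induction h.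
  - auto.
  - apply ehom_refl.
  - apply ehom_sym; auto.
  - eapply ehom_trans; eauto.
Qed.

Lemma ehom_map {X Y} (f : X -> Y) (E : rel X) (F : rel Y) :
  (forall u v, E u v -> F (f u) (f v)) ->
  forall l l', ehom E l l' -> ehom F (map f l) (map f l').
Proof.
  intro hF; apply (ehom_compat (map f)); intros l l' h; apply ehom_step.
  destruct h as [l1 a b c l2 hs|l1 a l2]; rewrite !map_app; simpl.
  - apply eh_tri; unfold simplex3 in *; intuition.
  - apply eh_dup.
Qed.

Lemma ehom_mono {X} (E F : rel X) l l' :
  subrel E F -> ehom E l l' -> ehom F l l'.
Proof.
  intros hEF h; rewrite <- (map_id l), <- (map_id l').
  exact (ehom_map id E F hEF _ _ h).
Qed.

Lemma ehom_app_l {X} (E : rel X) p l l' :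
  ehom E l l' -> ehom E (p ++ l) (p ++ l').
Proof.
  apply (ehom_compat (fun l => p ++ l)); intros l0 l0' h; apply ehom_step.
  destruct h as [l1 a b c l2 hs|l1 a l2]; rewrite !app_assoc.
  - apply eh_tri; auto.
  - apply eh_dup.
Qed.

Lemma ehom_app_r {X} (E : rel X) q l l' :
  ehom E l l' -> ehom E (l ++ q) (l' ++ q).
Proof.
  apply (ehom_compat (fun l => l ++ q)); intros l0 l0' h; apply ehom_step.
  destruct h as [l1 a b c l2 hs|l1 a l2]; rewrite <- !app_assoc; simpl.
  - apply eh_tri; auto.
  - apply eh_dup.
Qed.

Lemma last_app_cons {X} (l m : list X) a z :
  last (l ++ a :: m) z = last (a :: m) z.
Proof.
  induction l as [|b l IH]; [reflexivity|].
  rewrite <- IH; destruct l; reflexivity.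
Qed.

Lemma ehom_last {X} {E : rel X} {l l'} z : ehom E l l' -> last l z = last l' z.
Proof.
  induction 1 as [l l' h| | |]; try congruence.
  destruct h; rewrite !last_app_cons; reflexivity.
Qed.

Lemma chain_head {X} {E : rel X} {a b l} : chain E a b l -> exists r, l = a :: r.
Proof. destruct 1; eauto. Qed.

Lemma chain_snoc {X} {E : rel X} {a b l} : chain E a b l -> exists q, l = q ++ [b].
Proof.
  induction 1 as [x|x y z l _ _ [q ->]]; [exists []|exists (x :: q)]; reflexivity.
Qed.

Lemma chain_last {X} {E : rel X} {a b l} z : chain E a b l -> last l z = b.
Proof. intro h; destruct (chain_snoc h) as [q ->]; apply last_last. Qed.

Lemma chain_app {X} (E : rel X) a b c l m :
  E b b -> chain E a b l -> chain E b c m -> chain E a c (l ++ m).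
Proof.
  intros hb h; induction h; intro hm; simpl.
  - destruct (chain_head hm) as [r ->]; apply ch_cons with x; auto.
  - apply ch_cons with y; auto.
Qed.

Lemma chain_map {X Y} (f : X -> Y) (E : rel X) (F : rel Y) a b l :
  (forall u v, E u v -> F (f u) (f v)) ->
  chain E a b l -> chain F (f a) (f b) (map f l).
Proof.
  intros hF h; induction h; simpl.
  - apply ch_one.
  - apply ch_cons with (f y); auto.
Qed.

Lemma chain_preim {X Y} (f : X -> Y) (F : rel Y) a b l :
  chain (preim f F) a b l -> chain F (f a) (f b) (map f l).
Proof. apply chain_map; auto. Qed.

Lemma chain_ehom_pad {X} (E : rel X) a b p :
  chain E a b p -> ehom E p (a :: p ++ [b]).
Proof.
  intro h; destruct (chain_head h) as [r hr]; destruct (chain_snoc h) as [q hq].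
  apply ehom_trans with (p ++ [b]).
  - rewrite hq, <- app_assoc; apply ehom_sym, ehom_step, (eh_dup E q b []).
  - rewrite hr; apply ehom_sym, ehom_step, (eh_dup E [] a (r ++ [b])).
Qed.

Lemma chain_ehom_app_pair {X} (E : rel X) a b l :
  chain E a b l -> ehom E (l ++ [b; b]) l.
Proof.
  intro h; destruct (chain_snoc h) as [q ->]; rewrite <- app_assoc; simpl.
  apply ehom_trans with (q ++ [b; b]).
  - apply ehom_step, (eh_dup E q b [b]).
  - apply ehom_step, (eh_dup E q b []).
Qed.

Lemma sent_refl {X} {U : rel X -> Prop} {E} : uniformity U -> sent U E -> forall x, E x x.
Proof. intros hU [h _]; exact (u_diag hU _ h). Qed.

Lemma preim_sent {X Y} UX UY (f : X -> Y) F :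
  uniformity UX -> generates UX UY f -> sent UY F -> sent UX (preim f F).
Proof.
  intros hU [_ [_ hg]] [hF hs]; destruct (hg F hF) as [E [hE hEF]]; split.
  - apply (u_up hU hE); intros a b h; apply hEF; exists a, b; auto.
  - intros a b; unfold preim; auto.
Qed.

Lemma img_sent {X Y} UX UY (f : X -> Y) G :
  generates UX UY f -> sent UX G -> sent UY (img f G).
Proof.
  intros [_ [hi _]] [hG hs]; split; auto.
  intros a b [u [v [h [<- <-]]]]; exists v, u; auto.
Qed.

Lemma countable_base_antitone {X} {U : rel X -> Prop} :
  uniformity U -> countable_base U ->
  exists E : nat -> rel X, (forall n, sent U (E n)) /\
    (forall n m, n <= m -> subrel (E m) (E n)) /\
    (forall G, U G -> exists n, subrel (E n) G).
Proof.
  intros hU [B [hB hBbase]].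
  exists (fun n a b => forall k, k <= n -> B k a b /\ B k b a); split; [|split].
  - intro n; split.
    + induction n.
      * apply (u_up hU (u_inter hU _ _ (hB 0) (u_inv hU _ (hB 0)))).
        intros a b h k hk; replace k with 0 by lia; exact h.
      * apply (u_up hU (u_inter hU _ _ IHn
                (u_inter hU _ _ (hB (S n)) (u_inv hU _ (hB (S n)))))).
        intros a b [h1 h2] k hk.
        destruct (Nat.eq_dec k (S n)) as [->|]; [exact h2 | apply h1; lia].
    + intros a b h k hk; destruct (h k hk); auto.
  - intros n m hnm a b h k hk; apply h; lia.
  - intros G hG; destruct (hBbase G hG) as [n hn]; exists n.
    intros a b h; apply hn, (h n); lia.
Qed.

Lemma gpath_const {X} (U : rel X -> Prop) x : gpath U x x (fun _ => [x]).
Proof. split; intros; [apply ch_one | apply ehom_refl]. Qed.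

Lemma gpath_app {X} {U : rel X -> Prop} {a b c p q} :
  uniformity U -> gpath U a b p -> gpath U b c q -> gpath U a c (fun G => p G ++ q G).
Proof.
  intros hU [hp hp'] [hq hq']; split.
  - intros G hG; apply chain_app with b; auto; exact (sent_refl hU hG b).
  - intros G G' hG hG' hsub; apply ehom_trans with (p G ++ q G').
    + apply ehom_app_r; auto.
    + apply ehom_app_l; auto.
Qed.

Lemma gpath_short_ehom {X} (U : rel X -> Prop) (E G : rel X) a b c :
  gpath U a b c -> gshort E a b c -> sent U E -> sent U G -> subrel E G ->
  ehom G (c G) [a; b].
Proof.
  intros [_ hc] [_ hshort] hE hG hEG; apply ehom_trans with (c E).
  - apply ehom_sym; auto.
  - apply ehom_mono with E; auto.
Qed.

Lemma cauchy_nested_sequence {T} {U : rel T -> Prop} {Fl : (T -> Prop) -> Prop}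
  (D : nat -> rel T) :
  pfilter Fl -> cauchy U Fl -> (forall n, U (D n)) ->
  exists (A : nat -> T -> Prop) (zs : nat -> T),
    (forall n, Fl (A n)) /\ (forall n a b, A n a -> A n b -> D n a b) /\
    (forall n m, n <= m -> A n (zs m)).
Proof.
  intros [_ [hup [hint hne]]] hcau hD.
  destruct (choice _ (fun n => hcau _ (hD n))) as [A hA].
  set (C := fun n z => forall k, k <= n -> A k z).
  assert (hC : forall n, Fl (C n)).
  { induction n.
    - apply (hup _ _ (proj1 (hA 0))); intros z h k hk.
      replace k with 0 by lia; exact h.
    - apply (hup _ _ (hint _ _ IHn (proj1 (hA (S n))))).
      intros z [h1 h2] k hk.
      destruct (Nat.eq_dec k (S n)) as [->|]; [exact h2 | apply h1; lia]. }
  assert (hzs : forall n, exists z, C n z).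
  { intro n; apply NNPP; intro hn; apply hne.
    apply (hup _ _ (hC n)); intros z hz; apply hn; eauto. }
  destruct (choice _ hzs) as [zs hzs'].
  exists A, zs; split; [|split].
  - intro n; apply hA.
  - intro n; apply hA.
  - intros n m hnm; apply hzs'; exact hnm.
Qed.

Lemma induced_converges_of_sequence {X} {U : rel X -> Prop} {P : X -> Prop}
  {Fl : (sig P -> Prop) -> Prop} {E : nat -> rel X} {A : nat -> sig P -> Prop}
  {zs : nat -> sig P} {x : sig P} :
  uniformity U -> pfilter Fl -> (forall G, U G -> exists n, subrel (E n) G) ->
  (forall n, Fl (A n)) ->
  (forall n a b, A n a -> A n b -> E n (proj1_sig a) (proj1_sig b)) ->
  (forall n m, n <= m -> A n (zs m)) ->
  (forall j, exists m, j <= m /\ E j (proj1_sig x) (proj1_sig (zs m))) ->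
  converges (@induced X U P) Fl x.
Proof.
  intros hU [_ [hup _]] hbase hA hAE hAzs hx E' [E0 [hE0 hE0']].
  destruct (u_comp hU _ hE0) as [W [hW hWE0]].
  destruct (hbase W hW) as [j hj]; destruct (hx j) as [m [hjm hxm]].
  apply (hup _ _ (hA j)); intros z hz; apply hE0'.
  apply (hWE0 _ (proj1_sig (zs m))); apply hj; auto.
Qed.

Section FiberSequence.

Context {X Y : Type} {UX : rel X -> Prop} {UY : rel Y -> Prop} {f : X -> Y}.
Hypotheses (hUX : uniformity UX) (hUY : uniformity UY)
  (hf : gen_uniform_covering UX UY f).

Context {E : nat -> rel X}.
Hypotheses (E_sent : forall n, sent UX (E n))
  (E_antitone : forall n m, n <= m -> subrel (E m) (E n))
  (E_base : forall G, UX G -> exists n, subrel (E n) G).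

Context {y : Y} {xs : nat -> X} {s : nat -> rel X -> list X}.
Hypotheses (f_xs : forall n, f (xs n) = y)
  (s_gpath : forall n, gpath UX (xs n) (xs (S n)) (s n))
  (s_short : forall n, gshort (E n) (xs n) (xs (S n)) (s n)).

Fixpoint concat_steps (m : nat) : rel X -> list X :=
  match m with
  | 0 => fun _ => [xs 0]
  | S m => fun G => concat_steps m G ++ s m G
  end.

Lemma concat_steps_gpath m : gpath UX (xs 0) (xs m) (concat_steps m).
Proof.
  induction m; [apply gpath_const | apply (gpath_app hUX IHm (s_gpath m))].
Qed.

Lemma sent_preim {F} : sent UY F -> sent UX (preim f F).
Proof. apply preim_sent; [exact hUX | apply hf]. Qed.

Lemma map_concat_steps_chain F n :
  sent UY F -> chain F y y (map f (concat_steps n (preim f F))).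
Proof.
  intro hF; rewrite <- (f_xs 0) at 1; rewrite <- (f_xs n).
  apply chain_preim, concat_steps_gpath, sent_preim, hF.
Qed.

Lemma map_step_ehom F n :
  sent UY F -> subrel (E n) (preim f F) -> ehom F (map f (s n (preim f F))) [y; y].
Proof.
  intros hF hn.
  assert (h : ehom (preim f F) (s n (preim f F)) [xs n; xs (S n)])
    by (apply gpath_short_ehom with UX (E n); auto using sent_preim).
  apply (ehom_map f (preim f F) F) in h; [|auto].
  simpl in h; rewrite !f_xs in h; exact h.
Qed.

Lemma map_concat_steps_stable F n m :
  sent UY F -> subrel (E n) (preim f F) -> n <= m ->
  ehom F (map f (concat_steps m (preim f F))) (map f (concat_steps n (preim f F))).
Proof.
  intros hF hn hnm; induction hnm as [|m hnm IH]; [apply ehom_refl|].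
  apply ehom_trans with (2 := IH); simpl; rewrite map_app.
  apply ehom_trans with (map f (concat_steps m (preim f F)) ++ [y; y]).
  - apply ehom_app_l, map_step_ehom; auto.
    intros a b h; apply hn, (E_antitone _ _ hnm), h.
  - apply chain_ehom_app_pair with y, map_concat_steps_chain, hF.
Qed.

Definition stable_index (F : rel Y) : nat :=
  epsilon (inhabits 0) (fun n => sent UY F -> subrel (E n) (preim f F)).

Lemma stable_index_spec F : sent UY F -> subrel (E (stable_index F)) (preim f F).
Proof.
  intro hF; apply (epsilon_spec (inhabits 0) (fun n => sent UY F -> subrel (E n) (preim f F))); [|exact hF].
  destruct (E_base _ (proj1 (sent_preim hF))) as [n hn]; exists n; auto.
Qed.

Definition limit_loop (F : rel Y) : list Y :=
  map f (concat_steps (stable_index F) (preim f F)).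

Lemma limit_loop_ehom F n :
  sent UY F -> subrel (E n) (preim f F) ->
  ehom F (map f (concat_steps n (preim f F))) (limit_loop F).
Proof.
  intros hF hn; apply ehom_trans with
    (map f (concat_steps (max n (stable_index F)) (preim f F))).
  - apply ehom_sym, map_concat_steps_stable; auto; lia.
  - apply map_concat_steps_stable; auto using stable_index_spec; lia.
Qed.

Lemma limit_loop_gpath : gpath UY y y limit_loop.
Proof.
  split.
  - intros F hF; apply map_concat_steps_chain, hF.
  - intros F F' hF hF' hsub.
    apply ehom_trans with (map f (concat_steps (stable_index F') (preim f F))).
    + apply (ehom_map f (preim f F) F); [auto|].
      apply concat_steps_gpath; auto using sent_preim.
      intros a b h; apply hsub, h.
    + apply limit_loop_ehom; auto.
      intros a b h; apply hsub, stable_index_spec; auto.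
Qed.

Section Lift.

Context {x : X} {d : rel X -> list X}.
Hypotheses (d_gpath : gpath UX (xs 0) x d) (d_lift : geq UY (gmap f d) limit_loop).

Lemma lift_in_fiber : f x = y.
Proof.
  set (F := img f (E 0)).
  assert (hF : sent UY F) by (apply img_sent with UX; [apply hf | apply E_sent]).
  assert (hd : chain F (f (xs 0)) (f x) (gmap f d F))
    by (apply chain_preim, d_gpath, sent_preim, hF).
  rewrite <- (chain_last y hd), (ehom_last y (d_lift F hF)).
  apply (chain_last y (map_concat_steps_chain F (stable_index F) hF)).
Qed.

Lemma lift_close j : exists m, j <= m /\ E j x (xs m).
Proof.
  destruct hf as [hgen [_ [GP2 _]]].
  destruct (GP2 _ (E_sent j)) as [G [hG hGP]].
  set (H := img f G).
  assert (hH : sent UY H) by (apply img_sent with UX; auto).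
  set (m := max (stable_index H) j).
  exists m; split; [lia|].
  refine (proj1 (proj2 (hGP _ _ _ _ _ d_gpath (concat_steps_gpath m) _))).
  unfold ghomotopic, ehomotopic; fold H.
  split; [apply (sent_refl hUY hH)|].
  split; [rewrite lift_in_fiber, f_xs; apply (sent_refl hUY hH)|].
  apply ehom_trans with (limit_loop H); [apply d_lift, hH|].
  apply ehom_trans with (map f (concat_steps m (preim f H))).
  - apply ehom_sym, limit_loop_ehom; [exact hH|].
    intros a b h; apply stable_index_spec, (E_antitone _ m), h; auto; lia.
  - rewrite lift_in_fiber, <- (f_xs m).
    apply chain_ehom_pad, chain_preim, concat_steps_gpath, sent_preim, hH.
Qed.

End Lift.

Lemma fiber_sequence_limit : exists x, f x = y /\ forall j, exists m, j <= m /\ E j x (xs m).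
Proof.
  destruct hf as [_ [GP1 _]].
  assert (hl : gpath UY (f (xs 0)) y limit_loop)
    by (rewrite f_xs; apply limit_loop_gpath).
  destruct (GP1 _ _ _ hl) as [x [d [hd hlift]]].
  exists x; split; [apply (lift_in_fiber hd hlift) | apply (lift_close hd hlift)].
Qed.

End FiberSequence.

Theorem mainTheorem17 (X Y : Type) (UX : rel X -> Prop) (UY : rel Y -> Prop)
  (hUX : uniformity UX) (hUY : uniformity UY)
  (hcount : countable_base UX) (hjoin : uniformly_joinable UX)
  (f : X -> Y) (hf : gen_uniform_covering UX UY f) :
  forall y : Y, complete (@induced X UX (fun x : X => f x = y)).
Proof.
  intros y Fl hFl hcau.
  destruct (countable_base_antitone hUX hcount) as [E [E_sent [E_antitone E_base]]].
  destruct (choice _ (fun n => hjoin (E n) (E_sent n))) as [J hJ].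
  destruct (cauchy_nested_sequence
              (fun n a b => E n (proj1_sig a) (proj1_sig b) /\ J n (proj1_sig a) (proj1_sig b))
              hFl hcau) as [A [zs [hA [hAEJ hAzs]]]].
  { intro n; exists (fun a b => E n a b /\ J n a b); split; auto.
    apply (u_inter hUX); [apply E_sent | apply hJ]. }
  set (xs := fun n => proj1_sig (zs n)).
  assert (hstep : forall n, exists c,
             gpath UX (xs n) (xs (S n)) c /\ gshort (E n) (xs n) (xs (S n)) c).
  { intro n; apply hJ, (hAEJ n); apply hAzs; lia. }
  destruct (choice _ hstep) as [s hs].
  destruct (fiber_sequence_limit hUX hUY hf E_sent E_antitone E_base
              (fun n => proj2_sig (zs n)) (fun n => proj1 (hs n)) (fun n => proj2 (hs n)))
    as [x [hx hclose]].
  exists (exist _ x hx).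
  apply (induced_converges_of_sequence hUX hFl E_base hA
           (fun n a b ha hb => proj1 (hAEJ n a b ha hb)) hAzs), hclose.
Qed.
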